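(* Let $P(T)=a_0T^N+a_1T^{N-1}+\cdots+a_N\in\mathbb{L}_p[T]$ with $a_0\neq0$ and $a_N\neq 0$, let $s=s^P_{\max}$ be the maximal slope of its Newton polygon, and let $c\in\bar{\mathbb{F}}_p$ be a root of the residue polynomial $\mathrm{Res}_P(T)$ with multiplicity $q$. Put $P_{[c]}(T)=P(T+[c]p^{s})$. Then: (1) $N-q$ is a breakpoint of $\mathrm{NP}(P_{[c]})$; (2) in the range $x\leq N-q$, the Newton polygons $\mathrm{NP}(P)$ and $\mathrm{NP}(P_{[c]})$ coincide; (3) the remaining slopes of $\mathrm{NP}(P_{[c]})$ (on $N-q\le x\le N$) are strictly greater than $s$.
   Context: $\mathbb{L}_p=W(\bar{\mathbb{F}}_p)((p^{\mathbb{Q}}))$ is the $p$-adic Mal'cev–Neumann field of formal sums $\alpha=\sum_{x\in\mathbb{Q}}[\alpha_x]p^x$ ($\alpha_x\in\bar{\mathbb{F}}_p$, $[\cdot]$ Teichmüller lift, well-ordered support), with valuation $v_p(\alpha)=\min$ of support and $C_x(\alpha)=\alpha_x$. The Newton polygon $\mathrm{NP}(P)$ is the lower boundary of the convex hull of the points $(k,v_p(a_k))$ for $a_k\neq 0$; its vertices are breakpoints; $m_{\max}$ is the largest breakpoint $<N$, $s^P_{\max}=\frac{v_p(a_N)-v_p(a_{m_{\max}})}{N-m_{\max}}$, and the residue polynomial is $\mathrm{Res}_P(T)=\sum_{k=0}^{N-m_{\max}}C_{v_p(a_{m_{\max}})+s^P_{\max}(N-m_{\max}-k)}(a_{N-k})\,T^k\in\bar{\mathbb{F}}_p[T]$.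 *)

From mathcomp Require Import all_boot all_order all_algebra.
Set Implicit Arguments. Unset Strict Implicit. Unset Printing Implicit Defensive.
Import Order.TTheory GRing.Theory Num.Theory.
Local Open Scope ring_scope.

(* The p-adic Mal'cev--Neumann field  L_p = W(Fbar_p)((p^Q)).               *)
(* Its elements are formal sums  alpha = sum_x [alpha_x] p^x  (x in Q,      *)
(* well-ordered support).  The field itself (with Witt-vector carries) is   *)
(* not available in the libraries, so we package, as a record over a field  *)
(* L, the data the statement talks about:                                   *)
(*   C x alpha  = alpha_x  (the Teichmueller digit at x, in the residue     *)
(*                 field k = Fbar_p),                                       *)
(*   vp alpha   = v_p(alpha) = min of the support (for alpha <> 0),         *)
(*   teich c    = [c],  ppow s = p^s,                                       *)
(* together with properties that the digit expansion of L_p satisfies.     *)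
Record MNField (p : nat) (k : fieldType) (L : fieldType) := {
  vp : L -> rat;
  C : rat -> L -> k;
  teich : k -> L;
  ppow : rat -> L;
  C_zero : forall x, C x 0 = 0;
  vpP : forall a, a != 0 ->
          C (vp a) a != 0 /\ (forall y, y < vp a -> C y a = 0);
  C_one : forall x, C x 1 = (x == 0)%:R;
  C_teich : forall c s x, C x (teich c * ppow s) = if x == s then c else 0;
  (* leading digits add (carries only go to higher valuation) *)
  C_add : forall x a b, (forall y, y < x -> C y a = 0) ->
            (forall y, y < x -> C y b = 0) -> C x (a + b) = C x a + C x b;
  C_mul : forall x z a b, (forall y, y < x -> C y a = 0) ->
            (forall y, y < z -> C y b = 0) ->
            C (x + z) (a * b) = C x a * C z b
            /\ (forall y, y < x + z -> C y (a * b) = 0);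
  ppow1 : ppow 1 = p%:R
}.

Section NewtonPolygon.
Variables (p : nat) (k : fieldType) (L : fieldType) (M : MNField p k L).

(* P(T) = a_0 T^N + a_1 T^(N-1) + ... + a_N ; N = deg P *)
Definition degN (P : {poly L}) : nat := (size P).-1.
Definition coefa (P : {poly L}) (i : nat) : L := P`_(degN P - i).

Definition NPhull (P : {poly L}) (x y : rat) : Prop :=
  exists w : 'I_(degN P).+1 -> rat,
    [/\ forall i : 'I_(degN P).+1, 0 <= w i,
        forall i : 'I_(degN P).+1, coefa P i = 0 -> w i = 0,
        \sum_i w i = 1,
        \sum_i w i * (nat_of_ord i)%:R = x
      & \sum_i w i * vp M (coefa P i) = y].

Definition NPgraph (P : {poly L}) (x y : rat) : Prop :=
  NPhull P x y /\ (forall y', NPhull P x y' -> y <= y').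

Definition breakpoint (P : {poly L}) (m : nat) : Prop :=
  (m <= degN P)%N /\
  forall x1 x2 y0 y1 y2, 0 <= x1 -> x1 < m%:R -> m%:R < x2 ->
    x2 <= (degN P)%:R ->
    NPgraph P x1 y1 -> NPgraph P m%:R y0 -> NPgraph P x2 y2 ->
    y0 * (x2 - x1) != y1 * (x2 - m%:R) + y2 * (m%:R - x1).

(* s^P_max, given m = m_max *)
Definition smax (P : {poly L}) (m : nat) : rat :=
  (vp M (coefa P (degN P)) - vp M (coefa P m)) / (degN P - m)%:R.

(* Res_P(T), given m = m_max *)
Definition ResP (P : {poly L}) (m : nat) : {poly k} :=
  \poly_(j < (degN P - m).+1)
     C M (vp M (coefa P m) + smax P m * (degN P - m - j)%:R)
         (coefa P (degN P - j)).

Definition Pshift (P : {poly L}) (c : k) (s : rat) : {poly L} :=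
  P \Po ('X + (teich M c * ppow M s)%:P).

End NewtonPolygon.

From mathcomp Require Import all_boot all_order all_algebra.
From mathcomp Require Import ring lra zify.
Import Order.TTheory GRing.Theory Num.Theory.
Local Open Scope ring_scope.
Set Implicit Arguments. Unset Strict Implicit. Unset Printing Implicit Defensive.

(* Let y = a + s x be the line through the last edge [m, N] of NP(P): every point
   (i, v(a_i)) lies on or above it, strictly for i < m.  Put t = [c] p^s and let P_i
   be the coefficient of T^i.  The coefficient of T^j in P(T + t) is
   sum_r binom(j+r, j) P_(j+r) t^r, a sum of terms whose digits vanish below the
   height of the line at N - j, and whose digits at that height add up to the
   coefficient of T^j in Res_P(T + c).  Since c is a root of multiplicity q of
   Res_P, these digits vanish for j < q but not for j = q: NP(P_[c]) lies above the
   same line, touches it at N - q and leaves it to the right, which gives (1) and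
   (3).  For (2), every point of each of the two hulls is dominated, along slope s,
   by a point of the other hull further left (translate by t, resp. by -t); hence
   both lower boundaries agree left of N - q. *)

Section Digits.
Variables (p : nat) (k L : fieldType) (M : MNField p k L).

Definition vanish_below (x : rat) (a : L) := forall y, y < x -> C M y a = 0.

Lemma vanish_below_le x x' a : x' <= x -> vanish_below x a -> vanish_below x' a.
Proof. by move=> le_x'x ha y /lt_le_trans/(_ le_x'x); apply: ha. Qed.

Lemma vanish_below_lt y x a : vanish_below x a -> y < x -> vanish_below y a.
Proof. by move=> ha /ltW le_yx; apply: vanish_below_le le_yx ha. Qed.

Lemma vanish_below0 x : vanish_below x 0.
Proof. by move=> y _; rewrite C_zero. Qed.

Lemma vanish_belowD x a b :
  vanish_below x a -> vanish_below x b -> vanish_below x (a + b).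
Proof.
move=> ha hb y lt_yx.
by rewrite (C_add (vanish_below_lt ha lt_yx) (vanish_below_lt hb lt_yx)) ha ?hb ?addr0.
Qed.

Lemma C_sum x n (F : 'I_n -> L) : (forall i, vanish_below x (F i)) ->
  vanish_below x (\sum_i F i) /\ C M x (\sum_i F i) = \sum_i C M x (F i).
Proof.
elim: n F => [|n IH] F hF; first by rewrite !big_ord0 C_zero; split=> //; apply: vanish_below0.
have [lowS CS] := IH (fun i => F (widen_ord (leqnSn n) i)) (fun i => hF _).
rewrite !big_ord_recr /= (C_add lowS (hF ord_max)) CS.
by split=> //; apply: vanish_belowD.
Qed.

Lemma vanish_belowM x z a b : vanish_below x a -> vanish_below z b ->
  vanish_below (x + z) (a * b) /\ C M (x + z) (a * b) = C M x a * C M z b.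
Proof. by move=> ha hb; have [-> ?] := C_mul ha hb. Qed.

Lemma vanish_below_vp a : a != 0 -> vanish_below (vp M a) a.
Proof. by case/(vpP M). Qed.

Lemma vp_ge x a : a != 0 -> vanish_below x a -> x <= vp M a.
Proof.
move=> a_nz ha; rewrite leNgt; apply/negP => /ha.
by have [/eqP] := vpP M a_nz.
Qed.

Lemma vp_gt x a : a != 0 -> vanish_below x a -> C M x a = 0 -> x < vp M a.
Proof.
move=> a_nz ha Cx0; rewrite lt_neqAle vp_ge // andbT.
by apply: contra_eq_neq Cx0 => ->; have [] := vpP M a_nz.
Qed.

Lemma vp_leading_digit x a : vanish_below x a -> C M x a != 0 -> a != 0 /\ vp M a = x.
Proof.
move=> ha Cx_nz; have a_nz : a != 0 by apply: contraNneq Cx_nz => ->; rewrite C_zero.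
split=> //; apply/eqP; rewrite eq_le vp_ge // andbT leNgt; apply/negP => lt_vx.
by have [_ /(_ _ lt_vx)/eqP] := vpP M a_nz; rewrite (negbTE Cx_nz).
Qed.

Lemma vanish_below1 : vanish_below 0 1.
Proof. by move=> y y_lt0; rewrite C_one (negbTE (ltr0_neq0 y_lt0)). Qed.

Lemma C_natr n : vanish_below 0 n%:R /\ C M 0 n%:R = n%:R.
Proof.
elim: n => [|n [lown Cn]]; first by rewrite C_zero; split=> //; apply: vanish_below0.
rewrite -addn1 !natrD (C_add lown vanish_below1) Cn C_one eqxx.
by split=> //; apply: vanish_belowD => //; apply: vanish_below1.
Qed.

Lemma C_expr x a n : vanish_below x a ->
  vanish_below (x * n%:R) (a ^+ n) /\ C M (x * n%:R) (a ^+ n) = C M x a ^+ n.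
Proof.
move=> ha; elim: n => [|n [lown Cn]].
  by rewrite mulr0 C_one; split=> //; apply: vanish_below1.
rewrite exprS mulrSr mulrDr mulr1 addrC.
by have [lowS ->] := vanish_belowM ha lown; rewrite Cn exprS.
Qed.

(* Since (-1) * (-1) = 1 has its leading digit at 0, so does -1. *)
Lemma vanish_belowN x a : vanish_below x a -> vanish_below x (- a).
Proof.
have N1_nz : (-1 : L) != 0 by rewrite oppr_eq0 oner_eq0.
have [lowN1 CN1] := vanish_belowM (vanish_below_vp N1_nz) (vanish_below_vp N1_nz).
have vN1 : vp M (-1) = 0.
  move: CN1; rewrite mulrNN mulr1 C_one; have [CN1_nz _] := vpP M N1_nz.
  by case: eqP => [|_ /esym/eqP]; [lra | rewrite mulf_eq0 orbb (negbTE CN1_nz)].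
move=> ha; rewrite -mulN1r -[x]add0r -vN1.
by have [] := vanish_belowM (vanish_below_vp N1_nz) ha.
Qed.

Lemma C_teich_ppow c s : vanish_below s (teich M c * ppow M s) /\
  C M s (teich M c * ppow M s) = c.
Proof. by rewrite C_teich eqxx; split=> // y lt_ys; rewrite C_teich (lt_eqF lt_ys). Qed.

Lemma C_shift_term x s a u n r : vanish_below x a -> vanish_below s u ->
  vanish_below (x + s * r%:R) (a *+ n * u ^+ r) /\
  C M (x + s * r%:R) (a *+ n * u ^+ r) = C M x a *+ n * C M s u ^+ r.
Proof.
move=> ha hu; rewrite -[a *+ n]mulr_natr -[C M x a *+ n]mulr_natr.
have [low_an C_an] := vanish_belowM ha (C_natr n).1; rewrite addr0 (C_natr n).2 in low_an C_an.
by have [? ->] := vanish_belowM low_an (C_expr r hu).1; rewrite C_an (C_expr r hu).2.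
Qed.

End Digits.

Section SupportingLines.
Variables (p : nat) (k L : fieldType) (M : MNField p k L).
Implicit Types (Q : {poly L}) (a s x y : rat).

Definition above_line Q a s := forall i, (i <= degN Q)%N -> coefa Q i != 0 ->
  a + s * i%:R <= vp M (coefa Q i).

Definition strictly_above Q a s (I : pred nat) := forall i, (i <= degN Q)%N ->
  coefa Q i != 0 -> I i -> a + s * i%:R < vp M (coefa Q i).

Definition on_line Q a s r :=
  [/\ (r <= degN Q)%N, coefa Q r != 0 & vp M (coefa Q r) = a + s * r%:R].

Lemma sum_delta n (i : 'I_n) (F : 'I_n -> rat) : \sum_j (j == i)%:R * F j = F i.
Proof. by rewrite (bigD1 i) //= eqxx mul1r big1 ?addr0 // => j /negbTE->; rewrite mul0r. Qed.

Lemma hull_point Q i : (i <= degN Q)%N -> coefa Q i != 0 ->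
  NPhull M Q i%:R (vp M (coefa Q i)).
Proof.
move=> le_iN ci_nz; pose i' : 'I_(degN Q).+1 := Ordinal (le_iN : i < (degN Q).+1)%N.
exists (fun j => (j == i')%:R); split.
- by move=> j; rewrite ler0n.
- by move=> j; case: eqP => // -> ci0; move: ci_nz; rewrite ci0 eqxx.
- by rewrite -[RHS](sum_delta i' (fun _ => 1)); apply: eq_bigr => j _; rewrite mulr1.
- exact: (sum_delta i' (fun j => (j : nat)%:R)).
- exact: (sum_delta i' (fun j => vp M (coefa Q j))).
Qed.

Lemma hull_convex Q x1 y1 x2 y2 l : NPhull M Q x1 y1 -> NPhull M Q x2 y2 ->
  0 <= l -> l <= 1 -> NPhull M Q (l * x1 + (1 - l) * x2) (l * y1 + (1 - l) * y2).
Proof.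
move=> [w1 [w1_ge0 w1_0 w1_1 w1_x w1_y]] [w2 [w2_ge0 w2_0 w2_1 w2_x w2_y]] l_ge0 l_le1.
exists (fun i => l * w1 i + (1 - l) * w2 i); split.
- by move=> i; rewrite addr_ge0 ?mulr_ge0 ?subr_ge0.
- by move=> i ci0; rewrite w1_0 // w2_0 // !mulr0 addr0.
- by rewrite big_split /= -!mulr_sumr w1_1 w2_1; ring.
- by rewrite -w1_x -w2_x !mulr_sumr -big_split; apply: eq_bigr => i _ /=; ring.
- by rewrite -w1_y -w2_y !mulr_sumr -big_split; apply: eq_bigr => i _ /=; ring.
Qed.

Lemma hull_excess Q a s x y : NPhull M Q x y ->
  exists w : 'I_(degN Q).+1 -> rat,
    [/\ forall i, 0 <= w i, forall i, w i != 0 -> coefa Q i != 0,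
        forall b g, \sum_i w i * (b + g * (i : nat)%:R) = b + g * x
      & y - (a + s * x) = \sum_i w i * (vp M (coefa Q i) - (a + s * (i : nat)%:R))].
Proof.
move=> [w [w_ge0 w_0 w_1 w_x w_y]].
have affine b g : \sum_i w i * (b + g * (i : nat)%:R) = b + g * x.
  rewrite -w_x mulr_sumr -[b in RHS]mul1r -w_1 mulr_suml -big_split /=.
  by apply: eq_bigr => i _; ring.
exists w; split=> //.
- by move=> i; apply: contra_neq (w_0 i).
- rewrite -affine -w_y -sumrB; apply: eq_bigr => i _; ring.
Qed.

Lemma hull_above Q a s x y : above_line Q a s -> NPhull M Q x y -> a + s * x <= y.
Proof.
move=> hA /(hull_excess a s) [w [w_ge0 w_nz _ excess]].
rewrite -subr_ge0 excess; apply: sumr_ge0 => i _.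
have [->|/w_nz ci_nz] := eqVneq (w i) 0; first by rewrite mul0r.
by rewrite mulr_ge0 // subr_ge0; apply: hA (ltn_ord i) ci_nz.
Qed.

(* [0 < b + g * x] describes a half-line, so this serves both sides of a vertex. *)
Lemma hull_above_strict Q a s b g x y : above_line Q a s ->
  strictly_above Q a s (fun i => 0 < b + g * i%:R) -> 0 < b + g * x ->
  NPhull M Q x y -> a + s * x < y.
Proof.
move=> hA hS side_x /(hull_excess a s) [w [w_ge0 w_nz affine excess]].
have [/existsP[i /andP[wi_gt0 side_i]] | no_i] :=
  boolP [exists i, (0 < w i) && (0 < b + g * (i : nat)%:R)]; last first.
  move: side_x; rewrite -affine ltNge => /negP[]; apply: sumr_le0 => i _.
  move/existsPn: no_i => /(_ i); rewrite negb_and -!leNgt => /orP[wi_le0|].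
    have -> : w i = 0 by apply/le_anti; rewrite wi_le0 w_ge0.
    by rewrite mul0r.
  exact: mulr_ge0_le0.
have term_ge0 j : 0 <= w j * (vp M (coefa Q j) - (a + s * (j : nat)%:R)).
  have [->|/w_nz cj_nz] := eqVneq (w j) 0; first by rewrite mul0r.
  by rewrite mulr_ge0 // subr_ge0; apply: hA (ltn_ord j) cj_nz.
rewrite -subr_gt0 excess (bigD1 i) //= ltr_pwDl ?sumr_ge0 // mulr_gt0 // subr_gt0.
by apply: hS => //; [exact: (ltn_ord i) | rewrite w_nz ?gt_eqF].
Qed.

Lemma hull_above_right Q a s r x y : above_line Q a s ->
  strictly_above Q a s (fun i => r < i)%N -> r%:R < x -> NPhull M Q x y ->
  a + s * x < y.
Proof.
move=> hA hS lt_rx; apply: (hull_above_strict (b := - r%:R) (g := 1)) => //.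
  by move=> i le_iN ci_nz; rewrite mul1r addrC subr_gt0 ltr_nat; apply: hS.
by rewrite mul1r addrC subr_gt0.
Qed.

Lemma hull_above_left Q a s r x y : above_line Q a s ->
  strictly_above Q a s (fun i => i < r)%N -> x < r%:R -> NPhull M Q x y ->
  a + s * x < y.
Proof.
move=> hA hS lt_xr; apply: (hull_above_strict (b := r%:R) (g := -1)) => //.
  by move=> i le_iN ci_nz; rewrite mulN1r subr_gt0 ltr_nat; apply: hS.
by rewrite mulN1r subr_gt0.
Qed.

Lemma NPgraph_line Q a s x : above_line Q a s -> NPhull M Q x (a + s * x) ->
  NPgraph M Q x (a + s * x).
Proof. by move=> hA hx; split=> // y; apply: hull_above. Qed.

Lemma NPgraph_on_line Q a s r y : above_line Q a s -> on_line Q a s r ->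
  NPgraph M Q r%:R y -> y = a + s * r%:R.
Proof.
move=> hA [le_rN cr_nz vr] [hy ymin]; apply/le_anti; rewrite (hull_above hA hy) andbT.
by rewrite -vr; apply: ymin; apply: hull_point.
Qed.

Lemma on_line_NPgraph Q a s r : above_line Q a s -> on_line Q a s r ->
  NPgraph M Q r%:R (a + s * r%:R).
Proof. by move=> hA [le_rN cr_nz vr]; apply: NPgraph_line; rewrite // -vr; apply: hull_point. Qed.

Lemma line_vertex_not_collinear (a s r x1 x2 y1 y2 : rat) :
  x1 < r -> r < x2 -> a + s * x1 <= y1 -> a + s * x2 <= y2 ->
  a + s * x1 < y1 \/ a + s * x2 < y2 ->
  (a + s * r) * (x2 - x1) != y1 * (x2 - r) + y2 * (r - x1).
Proof.
move=> lt_x1r lt_rx2 le1 le2 strict; rewrite eq_sym -subr_eq0 gt_eqF //.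
have -> : y1 * (x2 - r) + y2 * (r - x1) - (a + s * r) * (x2 - x1) =
  (y1 - (a + s * x1)) * (x2 - r) + (y2 - (a + s * x2)) * (r - x1) by ring.
by case: strict => ?; nra.
Qed.

Lemma breakpoint_strict_right Q a s r : above_line Q a s -> on_line Q a s r ->
  strictly_above Q a s (fun i => r < i)%N -> breakpoint M Q r.
Proof.
move=> hA hr hS; have [le_rN _ _] := hr.
split=> // x1 x2 y0 y1 y2 _ lt1 lt2 _ [h1 _] g0 [h2 _].
rewrite (NPgraph_on_line hA hr g0).
apply: line_vertex_not_collinear (hull_above hA h1) (hull_above hA h2) _ => //.
by right; apply: hull_above_right hA hS lt2 h2.
Qed.

Lemma breakpoint_strict_left Q a s r : above_line Q a s -> on_line Q a s r ->
  strictly_above Q a s (fun i => i < r)%N -> breakpoint M Q r.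
Proof.
move=> hA hr hS; have [le_rN _ _] := hr.
split=> // x1 x2 y0 y1 y2 _ lt1 lt2 _ [h1 _] g0 [h2 _].
rewrite (NPgraph_on_line hA hr g0).
apply: line_vertex_not_collinear (hull_above hA h1) (hull_above hA h2) _ => //.
by left; apply: hull_above_left hA hS lt1 h1.
Qed.

Lemma not_breakpoint_on_edge Q a s r1 r2 m : above_line Q a s ->
  on_line Q a s r1 -> on_line Q a s r2 -> (r1 < m < r2)%N -> ~ breakpoint M Q m.
Proof.
move=> hA h1 h2 /andP[lt1 lt2] [_ not_collinear].
have [g1 g2] := (on_line_NPgraph hA h1, on_line_NPgraph hA h2).
have [le_r2N _ _] := h2.
have r12_gt0 : 0 < r2%:R - r1%:R :> rat by rewrite subr_gt0 ltr_nat (ltn_trans lt1).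
pose l : rat := (r2%:R - m%:R) / (r2%:R - r1%:R).
have l_ge0 : 0 <= l by apply: divr_ge0; [rewrite subr_ge0 ler_nat ltnW | exact: ltW].
have l_le1 : l <= 1 by rewrite ler_pdivrMr // mul1r lerD2l lerN2 ler_nat ltnW.
have ex : l * r1%:R + (1 - l) * r2%:R = m%:R by rewrite /l; field; rewrite gt_eqF.
have := hull_convex g1.1 g2.1 l_ge0 l_le1.
have -> : l * (a + s * r1%:R) + (1 - l) * (a + s * r2%:R) = a + s * m%:R.
  by rewrite -ex; ring.
rewrite ex => /(NPgraph_line hA) gm.
have [lt_r1m lt_mr2 le_r2N'] : [/\ r1%:R < m%:R :> rat, m%:R < r2%:R :> rat
    & r2%:R <= (degN Q)%:R :> rat] by rewrite !ltr_nat ler_nat.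
have /eqP[] := not_collinear _ _ _ _ _ (ler0n _ r1) lt_r1m lt_mr2 le_r2N' g1 gm g2.
ring.
Qed.

Lemma hull_move_right Q a s r x x2 y2 : above_line Q a s -> on_line Q a s r ->
  NPhull M Q x2 y2 -> x2 <= x -> x <= r%:R ->
  exists2 z, NPhull M Q x z & z <= y2 + s * (x - x2).
Proof.
move=> hA [le_rN cr_nz vr] h2 le_x2x le_xr.
have [eq_x2r|ne_x2r] := eqVneq x2 r%:R.
  have -> : x = x2 by apply/le_anti; rewrite le_x2x eq_x2r le_xr.
  by exists y2; rewrite // subrr mulr0 addr0.
have r2_gt0 : 0 < r%:R - x2 by rewrite subr_gt0 lt_neqAle ne_x2r (le_trans le_x2x).
pose l := (r%:R - x) / (r%:R - x2).
have l_ge0 : 0 <= l by apply: divr_ge0; [rewrite subr_ge0 | exact: ltW].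
have l_le1 : l <= 1 by rewrite ler_pdivrMr // mul1r lerD2l lerN2.
have ex : l * x2 + (1 - l) * r%:R = x by rewrite /l; field; rewrite gt_eqF.
have := hull_convex h2 (hull_point le_rN cr_nz) l_ge0 l_le1.
rewrite ex vr => hx; exists (l * y2 + (1 - l) * (a + s * r%:R)) => //.
rewrite -subr_ge0 -[X in X - x2]ex.
have -> : y2 + s * (l * x2 + (1 - l) * r%:R - x2) - (l * y2 + (1 - l) * (a + s * r%:R)) =
  (1 - l) * (y2 - (a + s * x2)) by ring.
by rewrite mulr_ge0 ?subr_ge0 ?(hull_above hA h2).
Qed.

Lemma NPgraph_slope_gt Q a s r x1 x2 y1 y2 : above_line Q a s -> on_line Q a s r ->
  strictly_above Q a s (fun i => r < i)%N -> r%:R <= x1 -> x1 < x2 ->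
  NPgraph M Q x1 y1 -> NPgraph M Q x2 y2 -> s < (y2 - y1) / (x2 - x1).
Proof.
move=> hA hr hS le_rx1 lt_x12 [_ y1_min] [h2 _].
have [le_rN cr_nz vr] := hr.
have gap2 : a + s * x2 < y2 by apply: hull_above_right hA hS _ h2; apply: le_lt_trans lt_x12.
have r2_gt0 : 0 < x2 - r%:R by rewrite subr_gt0 (le_lt_trans le_rx1).
pose l := (x2 - x1) / (x2 - r%:R).
have l_gt0 : 0 < l by rewrite divr_gt0 // subr_gt0.
have l_le1 : l <= 1 by rewrite ler_pdivrMr // mul1r lerD2l lerN2.
have ex : l * r%:R + (1 - l) * x2 = x1 by rewrite /l; field; rewrite gt_eqF.
have := hull_convex (hull_point le_rN cr_nz) h2 (ltW l_gt0) l_le1.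
rewrite ex vr => /y1_min le_y1.
have dx : x2 - x1 = l * (x2 - r%:R) by rewrite /l divfK // gt_eqF.
rewrite ltr_pdivlMr ?subr_gt0 // dx.
have : 0 < l * (y2 - (a + s * x2)) by rewrite mulr_gt0 // subr_gt0.
move: le_y1; nra.
Qed.

Definition dominated Q1 Q2 s := forall i, (i <= degN Q1)%N -> coefa Q1 i != 0 ->
  exists l, [/\ (l <= i)%N, (l <= degN Q2)%N, coefa Q2 l != 0 &
    vp M (coefa Q2 l) + s * (i%:R - l%:R) <= vp M (coefa Q1 i)].

Lemma above_line_dominated Q1 Q2 a s :
  dominated Q1 Q2 s -> above_line Q2 a s -> above_line Q1 a s.
Proof.
move=> hD hA i le_iN ci_nz; have [l [_ le_lN cl_nz le_v]] := hD i le_iN ci_nz.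
by apply: le_trans le_v; have := hA l le_lN cl_nz; lra.
Qed.

Lemma dominated_hull Q1 Q2 s x y : dominated Q1 Q2 s -> NPhull M Q1 x y ->
  exists x2 y2, [/\ NPhull M Q2 x2 y2, x2 <= x & y2 + s * (x - x2) <= y].
Proof.
move=> hD [w [w_ge0 w_0 w_1 w_x w_y]].
pose dom (i : 'I_(degN Q1).+1) (l : 'I_(degN Q2).+1) := [&& (l <= i)%N,
  coefa Q2 l != 0 & vp M (coefa Q2 l) + s * ((i : nat)%:R - (l : nat)%:R) <= vp M (coefa Q1 i)].
pose f i := odflt ord0 [pick l | dom i l].
have fP i : w i != 0 -> dom i (f i).
  move=> wi_nz; have ci_nz : coefa Q1 i != 0 by apply: contra_neq (w_0 i) wi_nz.
  rewrite /f; case: pickP => [l //|no_l].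
  have [l [le_li le_lN cl_nz le_v]] := hD i (ltn_ord i) ci_nz.
  by have := no_l (Ordinal (le_lN : l < (degN Q2).+1)%N); rewrite /dom /= le_li cl_nz le_v.
pose w2 j := \sum_i (f i == j)%:R * w i.
have push G : \sum_j w2 j * G j = \sum_i w i * G (f i).
  under eq_bigr do rewrite mulr_suml.
  rewrite exchange_big /=; apply: eq_bigr => i _.
  rewrite -(sum_delta (f i) G) mulr_sumr; apply: eq_bigr => j _.
  by rewrite eq_sym; ring.
exists (\sum_i w i * (f i : nat)%:R), (\sum_i w i * vp M (coefa Q2 (f i))); split.
- exists w2; split; rewrite ?push //.
  + by move=> j; apply: sumr_ge0 => i _; rewrite mulr_ge0.
  + move=> j cj0; apply: big1 => i _.
    have [->|/fP/and3P[_ cfi_nz _]] := eqVneq (w i) 0; first by rewrite mulr0.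
    by case: eqP => [efi|]; [move: cfi_nz; rewrite efi cj0 eqxx | rewrite mul0r].
  + transitivity (\sum_j w2 j * 1); first by apply: eq_bigr => j _; rewrite mulr1.
    by rewrite push -[RHS]w_1; apply: eq_bigr => i _; rewrite mulr1.
- rewrite -w_x; apply: ler_sum => i _.
  have [->|/fP/and3P[le_fi _ _]] := eqVneq (w i) 0; first by rewrite !mul0r.
  by rewrite ler_wpM2l // ler_nat.
- rewrite -w_y -w_x -sumrB mulr_sumr -big_split /=; apply: ler_sum => i _.
  have [->|/fP/and3P[_ _ le_v]] := eqVneq (w i) 0; first by rewrite !(mul0r, mulr0, subrr, addr0).
  by rewrite -mulrBr mulrCA -mulrDr ler_wpM2l.
Qed.

Lemma NPgraph_transfer Q1 Q2 a s r1 r2 x y :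
  above_line Q1 a s -> above_line Q2 a s -> dominated Q1 Q2 s -> dominated Q2 Q1 s ->
  on_line Q1 a s r1 -> on_line Q2 a s r2 -> x <= r1%:R -> x <= r2%:R ->
  NPgraph M Q1 x y -> NPgraph M Q2 x y.
Proof.
move=> hA1 hA2 hD12 hD21 hr1 hr2 le_xr1 le_xr2 [hy ymin].
have lower y' : NPhull M Q2 x y' -> y <= y'.
  move=> /(dominated_hull hD21)[x3 [y3 [h3 le_x3x le3]]].
  have [z hz le_z] := hull_move_right hA1 hr1 h3 le_x3x le_xr1.
  exact: le_trans (ymin _ hz) (le_trans le_z le3).
have [x3 [y3 [h3 le_x3x le3]]] := dominated_hull hD12 hy.
have [z hz le_z] := hull_move_right hA2 hr2 h3 le_x3x le_xr2.
have ezy : z = y by apply/le_anti; rewrite (le_trans le_z le3) lower.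
by split; first rewrite -ezy.
Qed.

Lemma max_slope_line Q : coefa Q 0 != 0 -> coefa Q (degN Q) != 0 -> (0 < degN Q)%N ->
  exists a s r, [/\ (r < degN Q)%N, above_line Q a s, on_line Q a s (degN Q),
    on_line Q a s r & strictly_above Q a s (fun i => i < r)%N].
Proof.
move=> c0_nz cN_nz N_gt0; set N := degN Q in cN_nz N_gt0 *; set vN := vp M (coefa Q N).
pose slope i := (vN - vp M (coefa Q i)) / (N - i)%:R.
have [im cim_nz max_im] := @arg_maxP _ _ 'I_N (Ordinal N_gt0) (fun i => coefa Q i != 0)
  (fun i => slope i) c0_nz.
set s := slope im; set a := vN - s * N%:R.
have gap i : (i < N)%N -> vp M (coefa Q i) - (a + s * i%:R) = (s - slope i) * (N - i)%:R.
  move=> lt_iN; rewrite /a /slope mulrBl divfK ?pnatr_eq0 ?subn_eq0 -?ltnNge //.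
  by rewrite natrB ?(ltnW lt_iN) //; ring.
have le_slope i : (i < N)%N -> coefa Q i != 0 -> slope i <= s.
  by move=> lt_iN ci_nz; apply: (max_im (Ordinal lt_iN)).
have ex_r : exists n, [&& (n < N)%N, coefa Q n != 0 & slope n == s].
  by exists im; rewrite ltn_ord cim_nz eqxx.
have [r /and3P[lt_rN cr_nz /eqP slope_r] min_r] := ex_minnP ex_r.
have Ni_gt0 i : (i < N)%N -> 0 < (N - i)%:R :> rat by rewrite ltr0n subn_gt0.
exists a, s, r; split=> //.
- move=> i le_iN ci_nz; rewrite -subr_ge0; have [->|ne_iN] := eqVneq i N.
    by rewrite /a addrNK subrr.
  have lt_iN : (i < N)%N by rewrite ltn_neqAle ne_iN.
  by rewrite gap // mulr_ge0 ?subr_ge0 ?le_slope ?ltW ?Ni_gt0.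
- by split=> //; rewrite /a subrK.
- by split; [apply: ltnW | | apply/eqP; rewrite -subr_eq0 gap // slope_r subrr mul0r].
- move=> i le_iN ci_nz lt_ir; have lt_iN := ltn_trans lt_ir lt_rN.
  rewrite -subr_gt0 gap // mulr_gt0 ?Ni_gt0 // subr_gt0 lt_neqAle le_slope // andbT.
  apply: contraTneq lt_ir => slope_i; rewrite -leqNgt min_r //.
  by rewrite lt_iN ci_nz slope_i eqxx.
Qed.

Lemma last_edge_line Q m : coefa Q 0 != 0 -> coefa Q (degN Q) != 0 ->
  breakpoint M Q m -> (m < degN Q)%N ->
  (forall m', breakpoint M Q m' -> (m' < degN Q)%N -> (m' <= m)%N) ->
  exists a, [/\ above_line Q a (smax M Q m), on_line Q a (smax M Q m) (degN Q),
    on_line Q a (smax M Q m) m & strictly_above Q a (smax M Q m) (fun i => i < m)%N].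
Proof.
move=> c0_nz cN_nz bm lt_mN m_max.
have [a [s [r [lt_rN hA hN hr hS]]]] := max_slope_line c0_nz cN_nz (leq_ltn_trans (leq0n m) lt_mN).
have le_rm : (r <= m)%N := m_max r (breakpoint_strict_left hA hr hS) lt_rN.
have eq_rm : r = m.
  apply/eqP; rewrite eqn_leq le_rm leqNgt; apply/negP => lt_rm.
  by apply: (not_breakpoint_on_edge hA hr hN) bm; rewrite lt_rm lt_mN.
have smax_s : smax M Q m = s.
  have [[_ _ vN] [_ _ vm]] := (hN, hr); rewrite /smax vN -eq_rm vm.
  by rewrite natrB ?(ltnW lt_rN) //; field; rewrite subr_eq0 eqr_nat gtn_eqF.
by exists a; rewrite smax_s -eq_rm.
Qed.

End SupportingLines.

Lemma coef_comp_XaddC (R : comNzRingType) (Q : {poly R}) (u : R) j :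
  (Q \Po ('X + u%:P))`_j = (Q^`N(j)).[u].
Proof.
elim/poly_ind: Q j => [|Q c IH] j; first by rewrite comp_poly0 coef0 linear0 horner0.
rewrite comp_poly_MXaddC mulrDr !coefD coefMX coefMC coefC IH.
case: j => [|j] /=; first by rewrite !nderivn0 hornerMXaddC IH nderivn0 add0r.
by rewrite nderivnMXaddC hornerD hornerMX IH addr0.
Qed.

Lemma coef_comp_XaddC_sum (R : comNzRingType) (Q : {poly R}) (u : R) j n :
  (size Q <= n)%N ->
  (Q \Po ('X + u%:P))`_j = \sum_(r < n) Q`_(j + r) *+ 'C(j + r, j) * u ^+ r.
Proof.
move=> le_Qn; rewrite coef_comp_XaddC (@horner_coef_wide _ n).
  by apply: eq_bigr => r _; rewrite coef_nderivn.
by rewrite /nderivn; apply: leq_trans (size_poly _ _) (leq_trans (leq_subr _ _) le_Qn).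
Qed.

Lemma size_degN (R : fieldType) (Q : {poly R}) : Q != 0 -> size Q = (degN Q).+1.
Proof. by move=> Q_nz; rewrite /degN prednK // size_poly_gt0. Qed.

Lemma coefa_subN (R : fieldType) (Q : {poly R}) j :
  (j <= degN Q)%N -> coefa Q (degN Q - j) = Q`_j.
Proof. by move=> le_jN; rewrite /coefa subKn. Qed.

Lemma degN_comp_XaddC (R : fieldType) (Q : {poly R}) (u : R) :
  degN (Q \Po ('X + u%:P)) = degN Q.
Proof. by rewrite /degN size_comp_poly2 // size_XaddC. Qed.

Lemma coef_comp_XaddC_mup (F : fieldType) (R : {poly F}) (c : F) : R != 0 ->
  [/\ forall j, (j < mup c R)%N -> (R \Po ('X + c%:P))`_j = 0,
      (R \Po ('X + c%:P))`_(mup c R) != 0 & (mup c R < size R)%N].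
Proof.
move=> R_nz; have [q [g]] := multiplicity_XsubC R c; rewrite R_nz /= => g_c eR.
have -> : mup c R = q by rewrite eR mupMr // mup_XsubCX eqxx.
have -> : R \Po ('X + c%:P) = (g \Po ('X + c%:P)) * 'X^q.
  by rewrite eR comp_polyM rmorphXn /= comp_polyB comp_polyX comp_polyC addrK.
split=> [j lt_jq | | ]; first by rewrite coefMXn lt_jq.
  by rewrite coefMXn ltnn subnn coef_comp_XaddC nderivn0.
by rewrite -(size_exp_XsubC q c) dvdp_leq // eR dvdp_mull.
Qed.

Section Translation.
Variables (p : nat) (k L : fieldType) (M : MNField p k L).
Implicit Types (P Q : {poly L}) (a s : rat).

(* The coefficient of T^i sits at abscissa degN P - i. *)
Definition line_digits P a s : {poly k} :=
  \poly_(i < size P) C M (a + s * (degN P - i)%:R) P`_i.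

Lemma coef_vanish_below_line P a s j : above_line M P a s ->
  vanish_below M (a + s * (degN P - j)%:R) P`_j.
Proof.
move=> hA; have [lt_Nj|le_jN] := ltnP (degN P) j.
  by rewrite nth_default; [exact: (vanish_below0 M) | apply: leq_trans (leqSpred _) lt_Nj].
have [->|cj_nz] := eqVneq P`_j 0; first exact: (vanish_below0 M).
apply: vanish_below_le (vanish_below_vp cj_nz); rewrite -coefa_subN //.
by apply: hA; rewrite ?leq_subr ?coefa_subN.
Qed.

Lemma coef_Pshift_digit P a s c j : above_line M P a s -> (j <= degN P)%N ->
  vanish_below M (a + s * (degN P - j)%:R) (Pshift M P c s)`_j /\
  C M (a + s * (degN P - j)%:R) (Pshift M P c s)`_j =
    (line_digits P a s \Po ('X + c%:P))`_j.
Proof.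
move=> hA le_jN; set N := degN P; set t := teich M c * ppow M s.
rewrite /Pshift -/t (coef_comp_XaddC_sum _ _ (leqnn (size P))).
rewrite (coef_comp_XaddC_sum _ _ (size_poly _ _)).
have term (r : 'I_(size P)) :
  vanish_below M (a + s * (N - j)%:R) (P`_(j + r) *+ 'C(j + r, j) * t ^+ r) /\
  C M (a + s * (N - j)%:R) (P`_(j + r) *+ 'C(j + r, j) * t ^+ r) =
    (line_digits P a s)`_(j + r) *+ 'C(j + r, j) * c ^+ r.
  rewrite coef_poly; case: ltnP => [lt_jrP|le_Pjr]; last first.
    rewrite nth_default // mul0rn mul0r C_zero mul0rn mul0r.
    by split=> //; apply: (vanish_below0 M).
  have le_jrN : (j + r <= N)%N by rewrite -ltnS (leq_trans lt_jrP (leqSpred _)).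
  have -> : a + s * (N - j)%:R = a + s * (N - (j + r))%:R + s * (r : nat)%:R.
    by rewrite (natrB _ le_jN) (natrB _ le_jrN) natrD; ring.
  have [lowt Ct] := C_teich_ppow M c s.
  by rewrite -Ct; apply: C_shift_term lowt; apply: coef_vanish_below_line.
have [low_sum ->] := C_sum (fun r => (term r).1).
by split=> //; apply: eq_bigr => r _; apply: (term r).2.
Qed.

Lemma dominated_comp_XaddC Q u s : vanish_below M s u ->
  dominated M (Q \Po ('X + u%:P)) Q s.
Proof.
move=> hu i; rewrite degN_comp_XaddC => le_iN ci_nz; set N := degN Q.
set b := coefa _ i in ci_nz *.
have [/existsP[l /andP[cl_nz le_v]]|none] := boolP [exists l : 'I_i.+1,
    (coefa Q l != 0) && (vp M (coefa Q l) + s * (i%:R - (l : nat)%:R) <= vp M b)].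
  have le_li : (l <= i)%N := ltn_ord l.
  by exists l; split=> //; apply: leq_trans le_li le_iN.
exfalso; have [/eqP Cb_nz _] := vpP M ci_nz; apply: Cb_nz.
have term (r : 'I_(size Q)) y : y <= vp M b ->
    C M y (Q`_(N - i + r) *+ 'C(N - i + r, N - i) * u ^+ r) = 0.
  move=> le_yb; have [lt_Nir|le_irN] := ltnP N (N - i + r).
    by rewrite nth_default ?mul0rn ?mul0r ?C_zero // (leq_trans (leqSpred _) lt_Nir).
  have le_ri : (r <= i)%N by lia.
  have -> : (N - i + r = N - (i - r))%N by lia.
  have [->|cr_nz] := eqVneq Q`_(N - (i - r)) 0; first by rewrite mul0rn mul0r C_zero.
  move/existsPn: none => /(_ (Ordinal (leq_ltn_trans (leq_subr r i) (ltnSn i)))) /negP.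
  have -> : i%:R - (i - r)%:R = (r : nat)%:R :> rat by rewrite natrB //; ring.
  rewrite /coefa /= -/N cr_nz /= => /negP; rewrite -ltNge => lt_bv.
  have [lowt _] := C_shift_term 'C(N - (i - r), N - i) r (vanish_below_vp cr_nz) hu.
  by apply: lowt; apply: le_lt_trans le_yb lt_bv.
have eb : b = \sum_(r < size Q) Q`_(N - i + r) *+ 'C(N - i + r, N - i) * u ^+ r.
  by rewrite /b /coefa degN_comp_XaddC (coef_comp_XaddC_sum _ _ (leqnn (size Q))).
rewrite {2}eb; have [_ ->] := C_sum (fun r y lt_yb => term r y (ltW lt_yb)).
by apply: big1 => r _; apply: term.
Qed.

Lemma line_digits_neq0 P a s r : on_line M P a s r -> line_digits P a s != 0.
Proof.
move=> [le_rN cr_nz vr]; have P_nz : P != 0 by apply: contraNneq cr_nz => ->; rewrite /coefa coef0.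
apply/eqP => /(congr1 (fun R : {poly k} => R`_(degN P - r))).
rewrite coef0 coef_poly size_degN // ltnS leq_subr subKn // -vr.
by have [/eqP] := vpP M cr_nz.
Qed.

Lemma ResP_line_digits P m a s : (m < degN P)%N -> on_line M P a s m ->
  strictly_above M P a s (fun i => i < m)%N -> smax M P m = s ->
  ResP M P m = line_digits P a s.
Proof.
move=> lt_mN [_ cm_nz vm] hS smax_s; set N := degN P.
have P_nz : P != 0 by apply: contraNneq cm_nz => ->; rewrite /coefa coef0.
apply/polyP => j; rewrite !coef_poly smax_s vm size_degN // -/N !ltnS.
have [le_jNm|lt_Nmj] := leqP j (N - m).
  have le_jN : (j <= N)%N by apply: leq_trans le_jNm (leq_subr _ _).
  rewrite le_jN coefa_subN //; congr (C M _ _).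
  by rewrite (natrB _ le_jNm) (natrB _ (ltnW lt_mN)) (natrB _ le_jN); ring.
case: leqP => // le_jN; have [->|cj_nz] := eqVneq P`_j 0; first by rewrite C_zero.
have := hS (N - j)%N (leq_subr _ _); rewrite coefa_subN // => /(_ cj_nz).
rewrite ltn_subCl ?(ltnW lt_mN) // => /(_ lt_Nmj) lt_line.
by have [_ ->] := vpP M cj_nz.
Qed.

Lemma Pshift_on_line P a s c : above_line M P a s -> line_digits P a s != 0 ->
  let q := mup c (line_digits P a s) in let Pc := Pshift M P c s in
  [/\ above_line M Pc a s, on_line M Pc a s (degN P - q)
    & strictly_above M Pc a s (fun i => degN P - q < i)%N].
Proof.
move=> hA R_nz q Pc; set N := degN P.
have [zero_below nz_at lt_qR] := coef_comp_XaddC_mup c R_nz; rewrite -/q in zero_below nz_at lt_qR.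
have le_qN : (q <= N)%N.
  by rewrite -ltnS (leq_trans lt_qR) // (leq_trans (size_poly _ _) (leqSpred _)).
have coefaPc i : coefa Pc i = Pc`_(N - i) by rewrite /coefa degN_comp_XaddC.
split.
- apply: above_line_dominated hA; apply: dominated_comp_XaddC; exact: (C_teich_ppow M c s).1.
- have [low_q C_q] := coef_Pshift_digit c hA le_qN; rewrite -C_q in nz_at.
  have [cq_nz vq] := vp_leading_digit low_q nz_at.
  by split; rewrite ?degN_comp_XaddC ?leq_subr // coefaPc subKn.
- move=> i; rewrite degN_comp_XaddC coefaPc => le_iN ci_nz lt_i.
  have [low_i C_i] := coef_Pshift_digit c hA (leq_subr i N).
  rewrite zero_below ?subKn // in low_i C_i *; last by lia.
  exact: vp_gt.
Qed.

End Translation.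

Theorem proposition2p6 (p : nat) (k : closedFieldType) (L : fieldType)
    (M : MNField p k L) (P : {poly L}) (m : nat) (c : k) (q : nat) :
  prime p -> p \in [pchar k] ->
  coefa P 0 != 0 -> coefa P (degN P) != 0 ->
  (* m = m_max : the largest breakpoint of NP(P) smaller than N *)
  breakpoint M P m -> (m < degN P)%N ->
  (forall m', breakpoint M P m' -> (m' < degN P)%N -> (m' <= m)%N) ->
  (* c is a root of Res_P of multiplicity q *)
  root (ResP M P m) c -> q = mup c (ResP M P m) ->
  let s := smax M P m in
  let Pc := Pshift M P c s in
  [/\ breakpoint M Pc (degN P - q),
      (forall x y, 0 <= x -> x <= (degN P - q)%:R ->
         (NPgraph M P x y <-> NPgraph M Pc x y))
    & (forall x1 x2 y1 y2, (degN P - q)%:R <= x1 -> x1 < x2 ->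
         x2 <= (degN P)%:R ->
         NPgraph M Pc x1 y1 -> NPgraph M Pc x2 y2 ->
         s < (y2 - y1) / (x2 - x1))].
Proof.
move=> _ _ c0_nz cN_nz bm lt_mN m_max _ ->{q} s Pc.
have [a [hA hN hm hS]] := last_edge_line c0_nz cN_nz bm lt_mN m_max.
rewrite (ResP_line_digits lt_mN hm hS erefl).
have [hAc hrc hSc] := Pshift_on_line c hA (line_digits_neq0 hm).
have ht := (C_teich_ppow M c s).1.
have D1 : dominated M Pc P s := dominated_comp_XaddC ht.
have D2 : dominated M P Pc s.
  by have := dominated_comp_XaddC (Q := Pc) (vanish_belowN ht); rewrite polyCN comp_polyXaddC_K.
split.
- exact: breakpoint_strict_right hAc hrc hSc.
- move=> x y _ le_xr; have le_xN : x <= (degN P)%:R.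
    by apply: le_trans le_xr _; rewrite ler_nat leq_subr.
  by split; [apply: (NPgraph_transfer hA hAc D2 D1 hN hrc)
            | apply: (NPgraph_transfer hAc hA D1 D2 hrc hN)].
- by move=> x1 x2 y1 y2 le_rx1 lt_x12 _; apply: NPgraph_slope_gt hAc hrc hSc le_rx1 lt_x12.
Qed.
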